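(* Under the hypotheses of Proposition 2.1 (both singular and invertible components, $P$ primitive), the Markov operator $\mathcal{Q}$ is uniformly ergodic: there exist constants $C<\infty$ and $a>0$ such that for every $\mathcal{Q}$-stationary probability measure $\eta$, every $n\in\mathbb{N}$ and every $\varphi\in L^\infty(\mathscr{A}\times\mathbb{P}^1)$, $$\Big\|\mathcal{Q}^n\varphi-\int\varphi\,d\eta\Big\|_\infty\le C e^{-an}\|\varphi\|_\infty.$$
   Context: $\mathscr{A}=\{1,\dots,k\}=\mathscr{A}_{\mathrm{sing}}\sqcup\mathscr{A}_{\mathrm{inv}}$, both nonempty; $\underline A=(A_i)$ with $\mathrm{rank}A_i=1$ on $\mathscr{A}_{\mathrm{sing}}$ and $\mathrm{rank}A_i=2$ on $\mathscr{A}_{\mathrm{inv}}$. $P=(p_{ij})$ primitive left stochastic ($p_{ij}$ = probability of $j\to i$) with stationary vector $q$. Projective action: $\hat A\hat v=\widehat{Av}$ for invertible $A$, and for rank one $A$ the constant map to $\hat r$, $r=\mathrm{Range}(A)$. $L^\infty(\mathscr{A}\times\mathbb{P}^1)$: bounded measurable functions with sup norm. $(\mathcal{Q}\varphi)(j,\hat v)=\sum_i\varphi(i,\hat A_i\hat v)p_{ij}$; $\eta$ is $\mathcal{Q}$-stationary if $\int\mathcal{Q}\varphi\,d\eta=\int\varphi\,d\eta$ for all such $\varphi$. *)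

From HB Require Import structures.
From mathcomp Require Import all_boot all_order all_algebra.
From mathcomp Require Import all_classical all_reals all_analysis.
Set Implicit Arguments. Unset Strict Implicit. Unset Printing Implicit Defensive.
Import Order.TTheory GRing.Theory Num.Theory.
Local Open Scope classical_set_scope.
Local Open Scope ring_scope.

(* The projective line P^1(R) is parametrized by the angle theta in [0, pi):
   theta <-> the line spanned by (cos theta, sin theta). *)
Definition P1set {R : realType} : set R := `[0, pi[%classic.

(* the angle in [0,pi) of the line through the nonzero vector (x, y) *)
Definition lineang {R : realType} (x y : R) : R :=
  if y == 0 then 0 else pi / 2 - atan (x / y).

Definition unitv {R : realType} (th : R) : 'cV[R]_2 :=
  \col_(i < 2) (if i == ord0 then cos th else sin th).

Definition vang {R : realType} (v : 'cV[R]_2) : R :=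
  lineang (v ord0 ord0) (v ord_max ord0).

(* a nonzero vector spanning Range(A) when rank A = 1 *)
Definition rangevec {R : realType} (A : 'M[R]_2) : 'cV[R]_2 :=
  if col ord0 A != 0 then col ord0 A else col ord_max A.

(* projective action: A^ v^ = (A v)^ for invertible A, and the constant map to
   r^ (r = Range A) for rank one A *)
Definition pact {R : realType} (A : 'M[R]_2) (th : R) : R :=
  if \rank A == 2%N then vang (A *m unitv th) else vang (rangevec A).

Definition Qop {R : realType} (k : nat) (P : 'M[R]_k) (A : 'I_k -> 'M[R]_2)
  (phi : 'I_k -> R -> R) : 'I_k -> R -> R :=
  fun j th => \sum_(i < k) phi i (pact (A i) th) * P i j.

Definition Linf_fun {R : realType} (k : nat) (phi : 'I_k -> R -> R) : Prop :=
  (forall i, measurable_fun P1set (phi i)) /\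
  exists M : R, forall i th, P1set th -> `|phi i th| <= M.

Definition supnorm {R : realType} (k : nat) (phi : 'I_k -> R -> R) : R :=
  sup [set r | exists i th, P1set th /\ r = `|phi i th|].

(* a (finite) measure on A x P^1 given by its restrictions eta_i to {i} x P^1 *)
Definition integ {R : realType} (k : nat) (eta : 'I_k -> {measure set R -> \bar R})
  (phi : 'I_k -> R -> R) : \bar R :=
  (\sum_(i < k) \int[eta i]_(x in P1set) (phi i x)%:E)%E.

Definition is_prob {R : realType} (k : nat) (eta : 'I_k -> {measure set R -> \bar R}) :=
  (forall i, eta i (~` P1set) = 0%E) /\ (\sum_(i < k) eta i P1set)%E = 1%E.

Definition Q_stationary {R : realType} (k : nat) (P : 'M[R]_k) (A : 'I_k -> 'M[R]_2)
  (eta : 'I_k -> {measure set R -> \bar R}) : Prop :=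
  forall phi, Linf_fun phi -> integ eta (Qop P A phi) = integ eta phi.

(* p_ij = probability of j -> i: columns sum to 1 *)
Definition left_stochastic {R : realType} (k : nat) (P : 'M[R]_k) : Prop :=
  (forall i j, 0 <= P i j) /\ (forall j, \sum_(i < k) P i j = 1).

Definition mxpow {R : realType} (k : nat) (P : 'M[R]_k) (m : nat) : 'M[R]_k :=
  iter m (mulmx P) 1%:M.

Definition primitive {R : realType} (k : nat) (P : 'M[R]_k) : Prop :=
  exists m : nat, forall i j, 0 < mxpow P m i j.

From HB Require Import structures.
From mathcomp Require Import all_boot all_order all_algebra.
From mathcomp Require Import all_classical all_reals all_analysis.
From mathcomp Require Import ring lra.
Import Order.TTheory GRing.Theory Num.Theory.
Local Open Scope classical_set_scope.
Local Open Scope ring_scope.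
Set Implicit Arguments. Unset Strict Implicit. Unset Printing Implicit Defensive.

(* A Doeblin argument.  For a rank-one component s, A_s sends every direction to
   the single point r^_s, and primitivity gives m with P^m(s, j) >= d > 0 for all
   j.  So Q^m f (j, v) is an average that puts weight at least d on the single
   value f(s, r^_s), and the oscillation of f shrinks by the factor 1 - d under
   Q^m.  A stationary eta gives Q^n phi the same integral as phi, so the integral
   of phi lies in the exponentially small range of Q^n phi. *)

Lemma P1setE (R : realType) (t : R) : P1set t = (0 <= t < pi).
Proof. by rewrite /P1set /= in_itv. Qed.

Lemma measurable_P1set (R : realType) : measurable (@P1set R).
Proof. exact: measurable_itv. Qed.

Lemma P1set_lineang (R : realType) (x y : R) : P1set (lineang x y).
Proof.
rewrite P1setE /lineang; case: eqP => _; first by rewrite lexx pi_gt0.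
have := atan_gtNpi2 (x / y); have := atan_ltpi2 (x / y); have := @pi_gt0 R.
by move=> *; apply/andP; split; lra.
Qed.

Lemma P1set_pact (R : realType) (A : 'M[R]_2) th : P1set (pact A th).
Proof. by rewrite /pact /vang; case: ifP => _; exact: P1set_lineang. Qed.

Lemma pact_rank1 (R : realType) (A : 'M[R]_2) th : \rank A != 2%N ->
  pact A th = pact A 0.
Proof. by move=> /negbTE rA; rewrite /pact rA. Qed.

Lemma measurable_inv_neq0 (R : realType) :
  measurable_fun [set r : R | r != 0] GRing.inv.
Proof.
apply: measurable_realfun.open_continuous_measurable_fun; first exact: open_neq.
by move=> r; rewrite inE => r0; exact: inv_continuous.
Qed.

Lemma measurable_lineang (R : realType) (x y : R -> R) :
  measurable_fun setT x -> measurable_fun setT y ->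
  measurable_fun setT (fun t => lineang (x t) (y t)).
Proof.
move=> mx my; rewrite /lineang.
apply: measurable_fun_if => //; first exact: measurable_realfun.measurable_fun_eqr.
apply: measurable_realfun.measurable_funB; first exact: measurable_cst.
apply: measurableT_comp.
  exact: measurable_realfun.continuous_measurable_fun (@continuous_atan R).
apply: measurable_realfun.measurable_funM; first exact: measurable_funS mx.
apply: (measurable_comp (F := [set r : R | r != 0])).
- rewrite (_ : [set r : R | r != 0] = ~` [set 0]); first exact/measurableC.
  by apply/funext => r; apply/propext; rewrite /setC /=; split => /eqP.
- by move=> _ [t [_ /= /negbT yt] <-].
- exact: measurable_inv_neq0.
- exact: measurable_funS my.
Qed.

Lemma measurable_mulmx_unitv (R : realType) (A : 'M[R]_2) r :
  measurable_fun setT (fun t => (A *m unitv t) r ord0).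
Proof.
under eq_fun do rewrite mxE.
apply: measurable_sum => l; apply: measurable_realfun.measurable_funM.
  exact: measurable_cst.
rewrite /unitv; under eq_fun do rewrite mxE.
by case: (l == ord0); apply: measurable_realfun.continuous_measurable_fun;
  [exact: continuous_cos | exact: continuous_sin].
Qed.

Lemma measurable_pact (R : realType) (A : 'M[R]_2) : measurable_fun P1set (pact A).
Proof.
apply: measurable_funTS; rewrite /pact; case: (\rank A == 2%N).
  by apply: measurable_lineang; exact: measurable_mulmx_unitv.
exact: measurable_cst.
Qed.

Lemma mxpowSr (R : realType) k (P : 'M[R]_k) n : mxpow P n.+1 = mxpow P n *m P.
Proof.
elim: n => [|n IH]; first by rewrite /mxpow /= mulmx1 mul1mx.
change (P *m mxpow P n.+1 = mxpow P n.+1 *m P).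
by rewrite {1}IH mulmxA.
Qed.

Section MarkovOperator.
Variables (R : realType) (k : nat) (P : 'M[R]_k) (A : 'I_k -> 'M[R]_2).
Hypothesis stochP : left_stochastic P.

Local Notation Q := (Qop P A).

Lemma Qop_affine (a b : R) f :
  Q (fun i t => a * f i t + b) = fun j th => a * Q f j th + b.
Proof.
have [_ sumP] := stochP.
apply/funext => j; apply/funext => th; rewrite /Qop.
under eq_bigr do rewrite mulrDl -mulrA.
by rewrite big_split /= -!mulr_sumr sumP mulr1.
Qed.

Lemma iter_Qop_affine (a b : R) f n :
  iter n Q (fun i t => a * f i t + b) = fun j th => a * iter n Q f j th + b.
Proof. by elim: n => [//|n IH]; rewrite /= IH Qop_affine. Qed.

Lemma Qop_bounds (a b : R) f :
  (forall i t, P1set t -> a <= f i t <= b) ->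
  forall j t, P1set t -> a <= Q f j t <= b.
Proof.
have [P_ge0 sumP] := stochP; move=> fab j t _.
have const_sum c : c = \sum_(i < k) c * P i j by rewrite -mulr_sumr sumP mulr1.
have /all_and2[fa fb] i := andP (fab i _ (P1set_pact (A i) t)).
apply/andP; split; [rewrite [leLHS]const_sum | rewrite [leRHS]const_sum];
  by apply: ler_sum => i _; apply: ler_wpM2r.
Qed.

Lemma iter_Qop_bounds (a b : R) f n :
  (forall i t, P1set t -> a <= f i t <= b) ->
  forall j t, P1set t -> a <= iter n Q f j t <= b.
Proof. by move=> fab; elim: n => [//|n IH] /=; exact: Qop_bounds. Qed.

Lemma Linf_fun_Qop f : Linf_fun f -> Linf_fun (Q f).
Proof.
case=> mf [M fM]; split.
  move=> j; apply: measurable_sum => i.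
  apply: measurable_realfun.measurable_funM; last exact: measurable_cst.
  apply: (measurable_comp (F := P1set)); first exact: measurable_P1set.
  - by move=> _ [t _ <-]; exact: P1set_pact.
  - exact: mf.
  - exact: measurable_pact.
exists M => j t Pt; rewrite ler_norml; apply: Qop_bounds => // i s Ps.
by rewrite -ler_norml; exact: fM.
Qed.

Lemma Linf_fun_iter_Qop f n : Linf_fun f -> Linf_fun (iter n Q f).
Proof. by move=> Lf; elim: n => [//|n IH] /=; exact: Linf_fun_Qop. Qed.

Lemma integ_iter_Qop (eta : 'I_k -> {measure set R -> \bar R}) f n :
  Q_stationary P A eta -> Linf_fun f -> integ eta (iter n Q f) = integ eta f.
Proof.
move=> stat Lf; elim: n => [//|n IH] /=.
by rewrite stat ?IH //; exact: Linf_fun_iter_Qop.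
Qed.

Section RankOneComponent.
Variable s : 'I_k.
Hypothesis rank_s : \rank (A s) != 2%N.

Local Notation x0 := (pact (A s) 0).

Lemma iter_Qop_ge_mxpow f n j t :
  (forall i t, P1set t -> 0 <= f i t) -> P1set t ->
  mxpow P n.+1 s j * f s x0 <= iter n.+1 Q f j t.
Proof.
have [P_ge0 _] := stochP; move=> f_ge0.
elim: n j t => [|n IH] j t Pt.
  rewrite /mxpow /= mulmx1 /Qop (bigD1 s) //= -(pact_rank1 t rank_s) mulrC.
  rewrite lerDl; apply: sumr_ge0 => i _; apply: mulr_ge0 => //.
  exact: f_ge0 (P1set_pact _ _).
rewrite iterS {2}/Qop mxpowSr mxE mulr_suml.
apply: ler_sum => i _; rewrite mulrAC; apply: ler_wpM2r => //.
exact: IH (P1set_pact _ _).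
Qed.

Variables (m : nat) (d : R).
Hypothesis d_le_mxpow : forall j, d <= mxpow P m.+1 s j.

Lemma iter_Qop_contract (a b : R) f :
  (forall i t, P1set t -> a <= f i t <= b) ->
  exists a' b' : R, b' - a' = (1 - d) * (b - a) /\
    forall j t, P1set t -> a' <= iter m.+1 Q f j t <= b'.
Proof.
move=> fab; set c := f s x0.
have /andP[ac cb] : a <= c <= b by exact: fab (P1set_pact _ _).
exists (a + d * (c - a)), (b - d * (b - c)); split; first by ring.
move=> j t Pt.
have lo := @iter_Qop_ge_mxpow (fun i t => 1 * f i t + - a) m j t.
have hi := @iter_Qop_ge_mxpow (fun i t => -1 * f i t + b) m j t.
rewrite !iter_Qop_affine in lo hi; cbv beta in lo, hi.
rewrite mul1r -/c in lo; rewrite mulN1r -/c in hi.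
have {}lo := lo (fun i u Pu => ltac:(by case/andP: (fab i u Pu); lra)) Pt.
have {}hi := hi (fun i u Pu => ltac:(by case/andP: (fab i u Pu); lra)) Pt.
have dlo : d * (c - a) <= mxpow P m.+1 s j * (c - a).
  by apply: ler_wpM2r; rewrite ?subr_ge0.
have dhi : d * (b - c) <= mxpow P m.+1 s j * (b - c).
  by apply: ler_wpM2r; rewrite ?subr_ge0.
by apply/andP; split; lra.
Qed.

Lemma iter_Qop_osc (a b : R) f n :
  (forall i t, P1set t -> a <= f i t <= b) ->
  exists a' b' : R, b' - a' = (1 - d) ^+ (n %/ m.+1) * (b - a) /\
    forall j t, P1set t -> a' <= iter n Q f j t <= b'.
Proof.
move=> fab.
have -> : iter n Q f = iter (n %/ m.+1 * m.+1) Q (iter (n %% m.+1) Q f).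
  by rewrite -iterD -divn_eq.
move: (n %/ m.+1)%N => q.
have {}fab := iter_Qop_bounds (n %% m.+1) fab.
elim: q => [|q [a' [b' [eab a'b']]]]; first by exists a, b; rewrite mul1r.
have [a'' [b'' [eab' a''b'']]] := iter_Qop_contract a'b'.
exists a'', b''; split; first by rewrite eab' eab exprS mulrA.
by move=> j t Pt; rewrite mulSn iterD; exact: a''b''.
Qed.

End RankOneComponent.
End MarkovOperator.

Lemma integral_P1set_bounds (R : realType) (mu : {measure set R -> \bar R})
    (f : R -> R) (a b : R) :
  (mu P1set < +oo)%E -> measurable_fun P1set f ->
  (forall x, P1set x -> a <= f x <= b) ->
  (a%:E * mu P1set <= \int[mu]_(x in P1set) (f x)%:E <= b%:E * mu P1set)%E.
Proof.
move=> mu_fin mf fab.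
have bounded_int (g : R -> R) : measurable_fun P1set g ->
    (forall x, P1set x -> `|g x| <= `|a| + `|b|) -> mu.-integrable P1set (EFin \o g).
  move=> mg gM; apply: measurable_bounded_integrable => //.
    exact: measurable_P1set.
  exists (`|a| + `|b|); split; first exact: num_real.
  by move=> N MN x Px; exact: le_trans (gM x Px) (ltW MN).
have f_int : mu.-integrable P1set (EFin \o f).
  apply: bounded_int => // x /fab /andP[ax xb].
  have /andP[? ?] : - `|a| <= a <= `|a| by rewrite -ler_norml.
  have /andP[? ?] : - `|b| <= b <= `|b| by rewrite -ler_norml.
  by rewrite ler_norml; apply/andP; split; lra.
have cst_int (c : R) : `|c| <= `|a| + `|b| -> mu.-integrable P1set (EFin \o cst c).
  by move=> cM; apply: bounded_int; [exact: measurable_cst | move=> x _].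
rewrite -!integral_cst; try exact: measurable_P1set.
apply/andP; split; apply: le_integral => //; try exact: measurable_P1set;
  try (by apply: cst_int; rewrite ?lerDl ?lerDr);
  by move=> x; rewrite inE => /fab /andP[ax xb]; rewrite lee_fin.
Qed.

Lemma fine_integ_bounds (R : realType) k (eta : 'I_k -> {measure set R -> \bar R})
    f (a b : R) :
  is_prob eta -> (forall i, measurable_fun P1set (f i)) ->
  (forall i t, P1set t -> a <= f i t <= b) ->
  a <= fine (integ eta f) <= b.
Proof.
move=> [_ eta1] mf fab.
have eta_fin i : (eta i P1set < +oo)%E.
  apply: le_lt_trans (ltey 1%E); rewrite -eta1 (bigD1 i) //= leeDl //.
  by apply: sume_ge0 => l _; exact: measure_ge0.
have /all_and2[lo hi] i := andP (integral_P1set_bounds (eta_fin i) (mf i) (fab i)).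
have sum_bound (c : R) : (\sum_(i < k) c%:E * eta i P1set = c%:E)%E.
  by rewrite -ge0_sume_distrr ?eta1 ?mule1 // => i _; exact: measure_ge0.
have : (a%:E <= integ eta f <= b%:E)%E.
  by rewrite -[a%:E]sum_bound -[b%:E]sum_bound; apply/andP; split;
    apply: lee_sum => i _; [exact: lo | exact: hi].
by case: (integ eta f) => [r | |] //= /andP[_]; rewrite leye_eq.
Qed.

Lemma uniform_lower_bound (R : realFieldType) (T : finType) (x : T -> R) (c : R) :
  0 < c -> (forall j, 0 < x j) -> exists2 d, 0 < d <= c & forall j, d <= x j.
Proof.
move=> c_gt0 x_gt0; exists (\big[Num.min/c]_j x j).
  apply/andP; split.
    by apply: (big_ind (fun y => 0 < y)) => // y z; rewrite lt_min => -> ->.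
  by apply: (big_rec (fun y => y <= c)) => // j y _ yc; rewrite ge_min yc orbT.
by move=> j; rewrite (bigD1 j) //= ge_min lexx.
Qed.

Lemma le_supnorm (R : realType) k (phi : 'I_k -> R -> R) :
  Linf_fun phi -> forall i t, P1set t -> `|phi i t| <= supnorm phi.
Proof.
case=> _ [M phiM] i t Pt; apply: ub_le_sup; last by exists i, t.
by exists M => _ [i' [t' [Pt' ->]]]; exact: phiM.
Qed.

Lemma expR_geometric_bound (R : realType) (rho : R) (m n : nat) :
  0 < rho < 1 -> (0 < m)%N ->
  rho ^+ (n %/ m) <= rho^-1 * expR (- (- ln rho / m%:R * n%:R)).
Proof.
move=> /andP[rho_gt0 rho_lt1] m_gt0.
rewrite -[rho ^+ _](mulKf (lt0r_neq0 rho_gt0)) -exprS.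
apply: ler_wpM2l; first by rewrite invr_ge0 ltW.
have -> : rho ^+ (n %/ m).+1 = expR ((n %/ m).+1%:R * ln rho).
  by rewrite expRM_natl lnK ?posrE.
rewrite ler_expR !mulNr opprK mulrAC -mulrA [leLHS]mulrC.
apply: ler_wnM2l; first by apply/ltW/ln_lt0; rewrite rho_gt0.
rewrite ler_pdivrMr ?ltr0n // -natrM ler_nat; exact/ltnW/ltn_ceil.
Qed.

Theorem theorem2p1 (R : realType) (k : nat) (A : 'I_k -> 'M[R]_2) (P : 'M[R]_k) :
  (forall i, \rank (A i) = 1%N \/ \rank (A i) = 2%N) ->
  (exists i, \rank (A i) = 1%N) ->
  (exists i, \rank (A i) = 2%N) ->
  left_stochastic P -> primitive P ->
  exists C a : R, 0 < a /\
    forall eta : 'I_k -> {measure set R -> \bar R},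
      is_prob eta -> Q_stationary P A eta ->
      forall (n : nat) (phi : 'I_k -> R -> R), Linf_fun phi ->
        forall j th, P1set th ->
          `|iter n (Qop P A) phi j th - fine (integ eta phi)|
            <= C * expR (- (a * n%:R)) * supnorm phi.
Proof.
move=> _ [s rank_s] [v rank_v] stochP [m' Pm'_gt0].
have rank_s' : \rank (A s) != 2%N by rewrite rank_s.
have [m Pm_gt0] : exists m, forall i j, 0 < mxpow P m.+1 i j.
  case: m' Pm'_gt0 => [|m] Pm_gt0; last by exists m.
  (* P^0 = 1 is not positive, because the invertible component forces k >= 2. *)
  have s_ne_v : s != v by apply: contra_neq rank_s' => ->; rewrite rank_v.
  by move: (Pm_gt0 s v); rewrite /mxpow /= mxE (negbTE s_ne_v) ltxx.
have half_gt0 : 0 < 2^-1 :> R by rewrite invr_gt0.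
have half_lt1 : 2^-1 < 1 :> R by rewrite invf_lt1 ?ltr1n.
have [d /andP[d_gt0 d_le_half] d_lb] := uniform_lower_bound half_gt0 (Pm_gt0 s).
set rho := 1 - d.
have rho01 : 0 < rho < 1 by rewrite /rho; apply/andP; split; lra.
exists (2 / rho), (- ln rho / m.+1%:R); split.
  by rewrite divr_gt0 ?ltr0n // oppr_gt0 ln_lt0.
move=> eta prob_eta stat n phi Lphi j th Pth.
have phi_bd i t : P1set t -> - supnorm phi <= phi i t <= supnorm phi.
  by move=> Pt; rewrite -ler_norml; exact: le_supnorm.
have supnorm_ge0 : 0 <= supnorm phi by case/andP: (phi_bd s th Pth) => *; lra.
have [a' [b' [ab' osc]]] := iter_Qop_osc stochP rank_s' d_lb n phi_bd.
have int_bd : a' <= fine (integ eta phi) <= b'.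
  rewrite -(integ_iter_Qop stochP n stat Lphi).
  by apply: fine_integ_bounds => //; case: (Linf_fun_iter_Qop A stochP n Lphi).
apply: (@le_trans _ _ (b' - a')).
  have /andP[? ?] := osc j th Pth; case/andP: int_bd => ? ?.
  by rewrite ler_norml; apply/andP; split; lra.
have := expR_geometric_bound n rho01 (ltn0Sn m).
rewrite ab' -/rho; nra.
Qed.
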